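(* Let $M\ge3$ and $N\ge1$ be integers and let $f_0,f_1,f_2,f_3:\mathbb{Z}_M\to\mathbb{Z}_N$ be four distinct functions forming a totally indistinguishable set. Then for each $x\in\mathbb{Z}_M$ exactly one of the following holds: (type 1) $f_0(x)=f_1(x)=f_2(x)=f_3(x)$; (type 2) $f_0(x)=f_1(x)\neq f_2(x)=f_3(x)$; (type 3) $f_0(x)=f_2(x)\neq f_1(x)=f_3(x)$; (type 4) $f_0(x)=f_3(x)\neq f_1(x)=f_2(x)$. Let $N_i$ be the number of $x\in\mathbb{Z}_M$ of type $i$, and let $\Gamma$ be the $4\times4$ matrix with $\Gamma_{j'j}=\#\{x\in\mathbb{Z}_M: f_{j'}(x)=f_j(x)\}$. Then $\det\Gamma=16(M+N_1)N_2N_3N_4$, and the standard oracle operators $U_{f_0},U_{f_1},U_{f_2},U_{f_3}$ are unambiguously distinguishable if and only if $N_2>0$, $N_3>0$ and $N_4>0$.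
   Context: A set $\sigma$ of functions $\mathbb{Z}_M\to\mathbb{Z}_N$ is totally indistinguishable if for every $x\in\mathbb{Z}_M$ and every $f\in\sigma$ there exists $f'\in\sigma$ with $f'\neq f$ and $f'(x)=f(x)$. For $f:\mathbb{Z}_M\to\mathbb{Z}_N$ the standard oracle operator is the unitary $U_f$ on $\mathcal{H}_M\otimes\mathcal{H}_N$ (with orthonormal bases $\{|x\rangle\}_{x\in\mathbb{Z}_M}$, $\{|y\rangle\}_{y\in\mathbb{Z}_N}$) given by $U_f|x\rangle\otimes|y\rangle=|x\rangle\otimes|y\oplus f(x)\rangle$, $\oplus$ being addition mod $N$. A finite list of unitary operators $W_1,\ldots,W_K$ on a finite-dimensional Hilbert space $\mathcal{H}$ is called unambiguously distinguishable if there exist a finite-dimensional ancilla space $\mathcal{H}_A$ and a unit vector $|\psi\rangle\in\mathcal{H}\otimes\mathcal{H}_A$ such that the vectors $(W_j\otimes\mathbb{1}_A)|\psi\rangle$ are linearly independent. *)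

From HB Require Import structures.
From mathcomp Require Import all_boot all_order all_algebra.
From mathcomp Require Import complex.
From mathcomp Require Import reals.
Set Implicit Arguments. Unset Strict Implicit. Unset Printing Implicit Defensive.
Import Order.TTheory GRing.Theory Num.Theory.
Local Open Scope ring_scope.

Definition totally_indistinguishable (M N : nat) (sigma : ('I_M -> 'I_N) -> Prop) : Prop :=
  forall (x : 'I_M) (g : 'I_M -> 'I_N), sigma g ->
    exists g' : 'I_M -> 'I_N, [/\ sigma g', g' <> g & g' x = g x].

(* Operators on the Hilbert space with orthonormal basis indexed by a finite
   type T are given by their matrix entries W t s = <t| W |s>. *)
(* Standard oracle U_f on H_M (x) H_N:  U_f |x>|y> = |x>|y (+) f x>, (+) = addition mod N. *)
Definition oracle (C : nzRingType) (M N : nat) (f : 'I_M -> 'I_N)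
  : ('I_M * 'I_N) -> ('I_M * 'I_N) -> C :=
  fun r c => ((r.1 == c.1) && (val r.2 == (val c.2 + val (f c.1)) %% N)%N)%:R.

(* Apply W (x) 1_A to a vector psi of H (x) H_A, with dim H_A = d. *)
Definition apply_tens1 (C : nzRingType) (T : finType) (d : nat)
  (W : T -> T -> C) (psi : T * 'I_d -> C) : T * 'I_d -> C :=
  fun p => \sum_(s : T) W p.1 s * psi (s, p.2).

Definition lin_indep (C : nzRingType) (P : Type) (K : nat) (v : 'I_K -> P -> C) : Prop :=
  forall c : 'I_K -> C, (forall p, \sum_(j < K) c j * v j p = 0) -> forall j, c j = 0.

Definition unambiguously_distinguishable (R : rcfType) (T : finType) (K : nat)
  (W : 'I_K -> T -> T -> R[i]) : Prop :=
  exists (d : nat) (psi : T * 'I_d -> R[i]),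
    \sum_(p : T * 'I_d) `|psi p| ^+ 2 = 1 /\
    lin_indep (fun j => apply_tens1 (W j) psi).

Definition type1 (M N : nat) (f : 'I_4 -> 'I_M -> 'I_N) (x : 'I_M) : bool :=
  [&& f 0 x == f 1 x, f 1 x == f 2 x & f 2 x == f 3 x].
Definition type2 (M N : nat) (f : 'I_4 -> 'I_M -> 'I_N) (x : 'I_M) : bool :=
  [&& f 0 x == f 1 x, f 1 x != f 2 x & f 2 x == f 3 x].
Definition type3 (M N : nat) (f : 'I_4 -> 'I_M -> 'I_N) (x : 'I_M) : bool :=
  [&& f 0 x == f 2 x, f 2 x != f 1 x & f 1 x == f 3 x].
Definition type4 (M N : nat) (f : 'I_4 -> 'I_M -> 'I_N) (x : 'I_M) : bool :=
  [&& f 0 x == f 3 x, f 3 x != f 1 x & f 1 x == f 2 x].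

Definition Gamma (M N : nat) (f : 'I_4 -> 'I_M -> 'I_N) : 'M[int]_4 :=
  \matrix_(j', j) (#|[set x : 'I_M | f j' x == f j x]|)%:Z.

(** Every value [f_j x] has a partner [f_j' x] with [j' <> j], so at each point
    the four values are either all equal or split into two distinct pairs along
    one of the pairings {01|23}, {02|13}, {03|12}, the coset partitions of the
    three subgroups of order 2 of the Klein group 'I_4.  Hence
    [Gamma = N1 J + N2 B2 + N3 B3 + N4 B4], with [J] the all-ones matrix and
    [Bk] the indicator of the k-th pairing: a Klein-group matrix, which the
    characters of the group diagonalise with eigenvalues [2(M + N1)], [2 N2],
    [2 N3], [2 N4].

    An oracle applied to [|x>|y>] only sees [f_j x].  If, say, [N2 = 0], then at
    every point the signs (1, 1, -1, -1) cancel on each class of the split, so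
    [U_0 + U_1 - U_2 - U_3 = 0] and no input separates the oracles.  Conversely,
    from points of types 2, 3, 4 a superposition of [|x>|0>] produces the basis
    vectors [|x, f_j x>], whose coefficients force [c_0 + c_1], [c_0 + c_2],
    [c_1 + c_2], [c_2 + c_3] to vanish in any linear relation [sum_j c_j ...],
    hence [c = 0]. *)
From HB Require Import structures.
From mathcomp Require Import all_boot all_order all_algebra.
From mathcomp Require Import complex reals ring.
Import Order.TTheory GRing.Theory Num.Theory.
Set Implicit Arguments. Unset Strict Implicit. Unset Printing Implicit Defensive.
Local Open Scope ring_scope.

Lemma ord4P (P : 'I_4 -> Prop) : P 0 -> P 1 -> P 2 -> P 3 -> forall i, P i.
Proof.
move=> P0 P1 P2 P3 [[|[|[|[|//]]]] lt_i4].
- by rewrite (_ : Ordinal _ = 0) //; apply: val_inj.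
- by rewrite (_ : Ordinal _ = 1) //; apply: val_inj.
- by rewrite (_ : Ordinal _ = 2) //; apply: val_inj.
- by rewrite (_ : Ordinal _ = 3) //; apply: val_inj.
Qed.

Lemma big_ord4 (V : nmodType) (F : 'I_4 -> V) :
  \sum_(j < 4) F j = F 0 + F 1 + F 2 + F 3.
Proof.
rewrite !big_ord_recl big_ord0 addr0 !addrA.
by congr (F _ + F _ + F _ + F _); apply: val_inj.
Qed.

Lemma card_set_sum (T : finType) (P : pred T) : #|[set x | P x]| = (\sum_x P x)%N.
Proof. by rewrite -sum1dep_card big_mkcond. Qed.

Definition block2 (i j : 'I_4) : bool := i./2 == j./2.
Definition block3 (i j : 'I_4) : bool := odd i == odd j.
Definition block4 (i j : 'I_4) : bool := block2 i j == block3 i j.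

Definition klein_mx (n1 n2 n3 n4 : nat) : 'M[int]_4 :=
  \matrix_(i, j) (n1 + n2 * block2 i j + n3 * block3 i j + n4 * block4 i j)%:Z.

(* The rows are the characters of the Klein group 'I_4 = Z/2 x Z/2 (bits
   [odd i] and [odd i./2]); they diagonalise [klein_mx], whose entries only
   depend on the "xor" of [i] and [j]. *)
Definition walsh : 'M[int]_4 :=
  \matrix_(k, i) (-1) ^+ ((odd k && odd i) (+) (odd k./2 && odd i./2)).

Lemma walsh_sqr : walsh *m walsh = 4%:M.
Proof. by apply/matrixP; apply: ord4P; apply: ord4P; rewrite !mxE big_ord4 !mxE. Qed.

Lemma walsh_klein_mx n1 n2 n3 n4 :
  walsh *m klein_mx n1 n2 n3 n4 =
  diag_mx (\row_k [:: 2 * (n1 + n2 + n3 + n4 + n1)%:Z; 2 * n3%:Z; 2 * n2%:Z; 2 * n4%:Z]`_k)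
    *m walsh.
Proof.
rewrite mul_diag_mx; apply/matrixP; apply: ord4P; apply: ord4P;
  rewrite !mxE big_ord4 !mxE /=; ring.
Qed.

Lemma det_klein_mx n1 n2 n3 n4 :
  \det (klein_mx n1 n2 n3 n4) = 16 * (n1 + n2 + n3 + n4 + n1)%:Z * n2%:Z * n3%:Z * n4%:Z.
Proof.
have det_walsh : \det walsh ^+ 2 = 4 ^+ 4.
  by rewrite expr2 -det_mulmx walsh_sqr det_scalar.
apply: (@mulfI _ (\det walsh)); first by apply: contra_eq_neq det_walsh => ->; rewrite expr0n.
rewrite -det_mulmx walsh_klein_mx det_mulmx det_diag !big_ord_recr big_ord0 !mxE /=; ring.
Qed.

Section PointTypes.
Variables (M N : nat) (f : 'I_4 -> 'I_M -> 'I_N).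

Definition paired_at (x : 'I_M) := forall j : 'I_4, exists2 j', j' != j & f j' x = f j x.

Lemma totally_indistinguishable_paired :
  totally_indistinguishable (fun g => exists j, g = f j) -> forall x, paired_at x.
Proof.
move=> hTI x j; have [_ [[j' ->] neq_f eq_fx]] := hTI x (f j) (ex_intro _ j erefl).
by exists j' => //; apply: contra_not_neq neq_f; apply: congr1.
Qed.

Lemma paired_repeats x : paired_at x ->
  [/\ f 0 x \in [:: f 1 x; f 2 x; f 3 x], f 1 x \in [:: f 0 x; f 2 x; f 3 x],
      f 2 x \in [:: f 0 x; f 1 x; f 3 x] & f 3 x \in [:: f 0 x; f 1 x; f 2 x]].
Proof.
move=> hx; have rep j : exists2 j', j' != j & f j x == f j' x.
  by have [j' ? eq_f] := hx j; exists j'; rewrite ?eq_f.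
split; [case: (rep 0) | case: (rep 1) | case: (rep 2) | case: (rep 3)] => j';
  by elim/ord4P: j' => //= _ eq_fj; rewrite !inE eq_fj ?orbT.
Qed.

Lemma types_partition x : paired_at x ->
  (type1 f x + type2 f x + type3 f x + type4 f x = 1)%N.
Proof.
case/paired_repeats; rewrite /type1 /type2 /type3 /type4 !inE.
move: (f 0 x) (f 1 x) (f 2 x) (f 3 x) => a0 a1 a2 a3.
by do ![case: eqP => [->|]] => //=; rewrite ?eqxx //; do ![case: eqP] => //; congruence.
Qed.

Lemma paired_types x : paired_at x ->
  [\/ type1 f x, type2 f x, type3 f x | type4 f x].
Proof.
move/types_partition.
case: (type1 f x); case: (type2 f x); case: (type3 f x); case: (type4 f x) => //= _;
  by [constructor 1 | constructor 2 | constructor 3 | constructor 4].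
Qed.

Lemma type1_coincidence x : type1 f x -> forall i j, f i x = f j x.
Proof.
case/and3P=> /eqP e01 /eqP e12 /eqP e23.
by apply: ord4P; apply: ord4P; congruence.
Qed.

Lemma type2_coincidence x : type2 f x -> forall i j, (f i x == f j x) = block2 i j.
Proof.
case/and3P=> /eqP e01 n12 /eqP e23; have n02 : f 0 x != f 2 x by rewrite e01.
have n20 : (f 2 x == f 0 x) = false by rewrite eq_sym (negbTE n02).
by apply: ord4P; apply: ord4P; rewrite /= -?e01 -?e23 ?eqxx ?(negbTE n02) ?n20.
Qed.

Lemma type3_coincidence x : type3 f x -> forall i j, (f i x == f j x) = block3 i j.
Proof.
case/and3P=> /eqP e02 n21 /eqP e13; have n01 : f 0 x != f 1 x by rewrite e02.
have n10 : (f 1 x == f 0 x) = false by rewrite eq_sym (negbTE n01).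
by apply: ord4P; apply: ord4P; rewrite /= -?e02 -?e13 ?eqxx ?(negbTE n01) ?n10.
Qed.

Lemma type4_coincidence x : type4 f x -> forall i j, (f i x == f j x) = block4 i j.
Proof.
case/and3P=> /eqP e03 n31 /eqP e12; have n01 : f 0 x != f 1 x by rewrite e03.
have n10 : (f 1 x == f 0 x) = false by rewrite eq_sym (negbTE n01).
by apply: ord4P; apply: ord4P; rewrite /= -?e03 -?e12 ?eqxx ?(negbTE n01) ?n10.
Qed.

Lemma coincidence_types x i j : paired_at x ->
  (f i x == f j x : nat) =
  (type1 f x + type2 f x * block2 i j + type3 f x * block3 i j + type4 f x * block4 i j)%N.
Proof.
move=> hx; move: (types_partition hx).
case: (paired_types hx) => h; rewrite h.
- rewrite (type1_coincidence h i j) eqxx.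
  by case: (type2 f x); case: (type3 f x); case: (type4 f x).
- rewrite (type2_coincidence h).
  by case: (type1 f x); case: (type3 f x); case: (type4 f x) => //= _; rewrite ?mul1n ?add0n ?addn0 ?mul0n.
- rewrite (type3_coincidence h).
  by case: (type1 f x); case: (type2 f x); case: (type4 f x) => //= _; rewrite ?mul1n ?add0n ?addn0 ?mul0n.
- rewrite (type4_coincidence h).
  by case: (type1 f x); case: (type2 f x); case: (type3 f x) => //= _; rewrite ?mul1n ?add0n ?addn0 ?mul0n.
Qed.

Lemma card_types : (forall x, paired_at x) ->
  (#|[set x | type1 f x]| + #|[set x | type2 f x]| + #|[set x | type3 f x]|
   + #|[set x | type4 f x]|)%N = M.
Proof.
move=> paired; rewrite !card_set_sum -!big_split /=.
by rewrite (eq_bigr _ (fun x _ => types_partition (paired x))) sum_nat_const card_ord muln1.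
Qed.

Lemma Gamma_klein_mx : (forall x, paired_at x) ->
  Gamma f = klein_mx #|[set x | type1 f x]| #|[set x | type2 f x]|
                     #|[set x | type3 f x]| #|[set x | type4 f x]|.
Proof.
move=> paired; apply/matrixP => i j; rewrite !mxE !card_set_sum.
rewrite (eq_bigr _ (fun x _ => coincidence_types i j (paired x))) !big_split /=.
by rewrite -!big_distrl.
Qed.

Section FibreSums.
Variables (K : comPzRingType) (c : 'I_4 -> K) (G : 'I_N -> K).

Lemma type1_sum x : type1 f x -> \sum_j c j * G (f j x) = (c 0 + c 1 + c 2 + c 3) * G (f 0 x).
Proof. by case/and3P=> /eqP e01 /eqP e12 /eqP e23; rewrite big_ord4 -e23 -e12 -e01; ring. Qed.

Lemma type2_sum x : type2 f x ->
  \sum_j c j * G (f j x) = (c 0 + c 1) * G (f 0 x) + (c 2 + c 3) * G (f 2 x).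
Proof. by case/and3P=> /eqP e01 _ /eqP e23; rewrite big_ord4 -e01 -e23; ring. Qed.

Lemma type3_sum x : type3 f x ->
  \sum_j c j * G (f j x) = (c 0 + c 2) * G (f 0 x) + (c 1 + c 3) * G (f 1 x).
Proof. by case/and3P=> /eqP e02 _ /eqP e13; rewrite big_ord4 -e02 -e13; ring. Qed.

Lemma type4_sum x : type4 f x ->
  \sum_j c j * G (f j x) = (c 0 + c 3) * G (f 0 x) + (c 1 + c 2) * G (f 1 x).
Proof. by case/and3P=> /eqP e03 _ /eqP e12; rewrite big_ord4 -e03 -e12; ring. Qed.

Lemma paired_sum_eq0 x : paired_at x ->
  (type1 f x -> c 0 + c 1 + c 2 + c 3 = 0) ->
  (type2 f x -> c 0 + c 1 = 0 /\ c 2 + c 3 = 0) ->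
  (type3 f x -> c 0 + c 2 = 0 /\ c 1 + c 3 = 0) ->
  (type4 f x -> c 0 + c 3 = 0 /\ c 1 + c 2 = 0) -> \sum_j c j * G (f j x) = 0.
Proof.
move=> hx h1 h2 h3 h4; case: (paired_types hx) => h.
- by rewrite type1_sum // h1 // mul0r.
- by rewrite type2_sum //; have [-> ->] := h2 h; rewrite !mul0r addr0.
- by rewrite type3_sum //; have [-> ->] := h3 h; rewrite !mul0r addr0.
- by rewrite type4_sum //; have [-> ->] := h4 h; rewrite !mul0r addr0.
Qed.

End FibreSums.
End PointTypes.

Lemma ud_lin_indep (R : rcfType) (T : finType) (K : nat) (W : 'I_K -> T -> T -> R[i]) :
  unambiguously_distinguishable W -> lin_indep (fun j (rs : T * T) => W j rs.1 rs.2).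
Proof.
case=> d [psi [_ indep]] c /= Wc; apply: indep => p; rewrite /apply_tens1.
under eq_bigr => j _ do rewrite big_distrr /=.
rewrite exchange_big /=; apply: big1 => s _.
under eq_bigr => j _ do rewrite mulrA.
by rewrite -big_distrl /= (Wc (p.1, s)) mul0r.
Qed.

Lemma oracle_sum_eq0 (K : nzRingType) (L M N : nat) (f : 'I_L -> 'I_M -> 'I_N)
    (c : 'I_L -> K) :
  (forall x (G : 'I_N -> K), \sum_j c j * G (f j x) = 0) ->
  forall r s, \sum_j c j * oracle K (f j) r s = 0.
Proof.
move=> h r s.
exact: (h s.1 (fun y => ((r.1 == s.1) && (val r.2 == (val s.2 + val y) %% N))%N%:R)).
Qed.

Definition input_state (C : nzRingType) (M n : nat) (w : 'I_M -> C)
    (p : ('I_M * 'I_n.+1) * 'I_1) : C :=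
  if p.1.2 == ord0 then w p.1.1 else 0.

Lemma apply_oracle_input (C : nzRingType) (M n : nat) (g : 'I_M -> 'I_n.+1)
    (w : 'I_M -> C) x y k :
  apply_tens1 (oracle C g) (input_state w) ((x, y), k) = w x * (y == g x)%:R.
Proof.
rewrite /apply_tens1 (bigD1 (x, ord0)) //= big1 ?addr0.
  by rewrite /oracle /input_state /= eqxx add0n modn_small ?ltn_ord // mulr_natl mulr_natr.
move=> [x' y'] /= ne; rewrite /oracle /input_state /=.
case: (eqVneq y' ord0) => [ey|]; last by rewrite mulr0.
by case: (eqVneq x x') => [ex|]; [rewrite ex ey eqxx in ne | rewrite mul0r].
Qed.

Lemma norm_input_state (R : rcfType) (M n : nat) (w : 'I_M -> R[i]) :
  \sum_p `|input_state (n := n) w p| ^+ 2 = \sum_x `|w x| ^+ 2.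
Proof.
rewrite -(pair_bigA _ (fun xy k => `|input_state w (xy, k)| ^+ 2)).
rewrite -(pair_bigA _ (fun x y => \sum_k `|input_state w ((x, y), k)| ^+ 2)).
apply: eq_bigr => x _; under eq_bigr => y _ do rewrite big_ord1.
rewrite (bigD1 ord0) //= big1 ?addr0 => [|y /negbTE ny]; first by rewrite /input_state /= ?eqxx.
by rewrite /input_state /= ny normr0 expr0n.
Qed.

Lemma unit_vector_on (R : rcfType) (T : finType) (S : {set T}) : S != set0 ->
  exists2 w : T -> R[i], \sum_x `|w x| ^+ 2 = 1 & forall x, x \in S -> w x != 0.
Proof.
move=> S_neq0; have S_gt0 : (#|S|%:R : R[i]) != 0 by rewrite pnatr_eq0 -lt0n card_gt0.
pose a : R[i] := (sqrtC #|S|%:R)^-1.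
exists (fun x => (x \in S)%:R * a) => [|x ->]; last by rewrite mul1r invr_eq0 sqrtC_eq0.
transitivity (\sum_(x in S) `|a| ^+ 2).
  rewrite [RHS]big_mkcond /=; apply: eq_bigr => x _.
  by case: (x \in S); rewrite ?mul1r ?mul0r ?normr0 ?expr0n.
rewrite sumr_const normfV exprVn ger0_norm ?sqrtC_ge0 ?ler0n // sqrtCK.
by rewrite -[LHS]mulr_natr mulVf.
Qed.

Lemma two_point_coefs_eq0 (T : eqType) (K : pzRingType) (a b : T) (u v : K) : a != b ->
  (forall y, u * (y == a)%:R + v * (y == b)%:R = 0) -> u = 0 /\ v = 0.
Proof.
move=> /negbTE neq_ab h; split; [have := h a | have := h b].
  by rewrite eqxx neq_ab mulr1 mulr0 addr0.
by rewrite eqxx eq_sym neq_ab mulr1 mulr0 add0r.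
Qed.

Lemma pair_sums_eq0 (K : numDomainType) (c : 'I_4 -> K) :
  c 0 + c 1 = 0 -> c 0 + c 2 = 0 -> c 1 + c 2 = 0 -> c 2 + c 3 = 0 -> forall j, c j = 0.
Proof.
move=> c01 c02 c12 c23.
have c0 : c 0 = 0.
  have : c 0 *+ 2 = (c 0 + c 1) + (c 0 + c 2) - (c 1 + c 2) by ring.
  by rewrite c01 c02 c12 subr0 addr0 => /eqP; rewrite mulrn_eq0 => /eqP.
have c1 : c 1 = 0 by rewrite -c01 c0 add0r.
have c2 : c 2 = 0 by rewrite -c02 c0 add0r.
by apply: ord4P => //; rewrite -c23 c2 add0r.
Qed.

Section Distinguishability.
Variables (R : rcfType) (M : nat).

Lemma ud_types_pos (N : nat) (f : 'I_4 -> 'I_M -> 'I_N) : (forall x, paired_at f x) ->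
  unambiguously_distinguishable (fun j => oracle R[i] (f j)) ->
  [/\ (0 < #|[set x | type2 f x]|)%N, (0 < #|[set x | type3 f x]|)%N
    & (0 < #|[set x | type4 f x]|)%N].
Proof.
move=> paired /ud_lin_indep indep.
have indep_signs (c : 'I_4 -> R[i]) : c 0 = 1 ->
    ~ (forall x (G : 'I_N -> R[i]), \sum_j c j * G (f j x) = 0).
  move=> c0 /oracle_sum_eq0 oc; have /eqP := indep c (fun rs => oc rs.1 rs.2) 0.
  by rewrite c0 oner_eq0.
(* Without points of type k, the sign vector that is +1 exactly on 0 and its
   partner in the k-th pairing sums to zero over every class at every point. *)
rewrite !lt0n; split; apply/negP => /eqP /card0_eq no_type;
  [ apply: (indep_signs (fun j => [:: 1; 1; -1; -1]`_j))
  | apply: (indep_signs (fun j => [:: 1; -1; 1; -1]`_j))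
  | apply: (indep_signs (fun j => [:: 1; -1; -1; 1]`_j)) ] => // x G;
  apply: (paired_sum_eq0 G (paired x)) => h /=;
  by [ring | split; ring | have := no_type x; rewrite !inE h].
Qed.

Lemma ud_of_type_points (n : nat) (f : 'I_4 -> 'I_M -> 'I_n.+1) (x2 x3 x4 : 'I_M) :
  type2 f x2 -> type3 f x3 -> type4 f x4 ->
  unambiguously_distinguishable (fun j => oracle R[i] (f j)).
Proof.
move=> h2 h3 h4.
have S_neq0 : [set x2; x3; x4] != set0 by apply/set0Pn; exists x2; rewrite !inE eqxx.
have [w w_unit w_neq0] := unit_vector_on R S_neq0.
exists 1%N, (input_state w); split => [|c hc]; first by rewrite norm_input_state.
have fibre x y : x \in [set x2; x3; x4] -> \sum_j c j * (y == f j x)%:R = 0.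
  move=> xS; apply: (mulfI (w_neq0 x xS)); rewrite mulr0 -[RHS](hc ((x, y), ord0)) mulr_sumr.
  by apply: eq_bigr => j _; rewrite apply_oracle_input mulrCA.
have [c01 c23] : c 0 + c 1 = 0 /\ c 2 + c 3 = 0.
  apply: (two_point_coefs_eq0 (a := f 0 x2) (b := f 2 x2)); first by case/and3P: h2 => /eqP->.
  by move=> y; rewrite -(type2_sum c (fun z => (y == z)%:R) h2) fibre // !inE eqxx.
have [c02 _] : c 0 + c 2 = 0 /\ c 1 + c 3 = 0.
  apply: (two_point_coefs_eq0 (a := f 0 x3) (b := f 1 x3)); first by case/and3P: h3 => /eqP->.
  by move=> y; rewrite -(type3_sum c (fun z => (y == z)%:R) h3) fibre // !inE eqxx orbT.
have [_ c12] : c 0 + c 3 = 0 /\ c 1 + c 2 = 0.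
  apply: (two_point_coefs_eq0 (a := f 0 x4) (b := f 1 x4)); first by case/and3P: h4 => /eqP->.
  by move=> y; rewrite -(type4_sum c (fun z => (y == z)%:R) h4) fibre // !inE eqxx !orbT.
exact: pair_sums_eq0.
Qed.

End Distinguishability.

Theorem mainTheorem11 (R : realType) (M N : nat) (hM : (3 <= M)%N) (hN : (1 <= N)%N)
  (f : 'I_4 -> 'I_M -> 'I_N)
  (hdist : injective f)
  (hTI : totally_indistinguishable (fun g => exists j, g = f j)) :
  (forall x : 'I_M,
     (type1 f x + type2 f x + type3 f x + type4 f x = 1)%N) /\
  (let N1 := #|[set x | type1 f x]| in
   let N2 := #|[set x | type2 f x]| in
   let N3 := #|[set x | type3 f x]| in
   let N4 := #|[set x | type4 f x]| in
   \det (Gamma f) = 16%:Z * (M + N1)%:Z * N2%:Z * N3%:Z * N4%:Z /\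
   (unambiguously_distinguishable (R := R) (fun j => @oracle R[i] M N (f j))
      <-> [/\ (0 < N2)%N, (0 < N3)%N & (0 < N4)%N])).
Proof.
have paired := totally_indistinguishable_paired hTI.
split=> [x|]; first exact: types_partition.
split; first by rewrite Gamma_klein_mx // det_klein_mx card_types.
split; first exact: ud_types_pos.
case: N hN f hdist hTI paired => [//|n] _ f _ _ _.
case=> /card_gt0P [x2] /[!inE] h2 /card_gt0P [x3] /[!inE] h3 /card_gt0P [x4] /[!inE] h4.
exact: ud_of_type_points h2 h3 h4.
Qed.
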